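(* Let $n\ge 3$ and let $C=(c_1,\dots,c_k)$, $k\ge 3$, be a circuit of the complete graph $K_n$. Define \[L_C=\sum_{1\le i<j\le k}(-1)^{i+j}\,(x_{t(c_i)}-x_{s(c_i)})\,\omega_{C\setminus\{c_i,c_j\}},\qquad L'_C=\sum_{1\le i<j\le k}(-1)^{i+j}\,(y_{t(c_i)}-y_{s(c_i)})\,\omega_{C\setminus\{c_i,c_j\}}\] in $E_2^{1,k-2}$. Then $d_2(L_C)=0$ and $d_2(L'_C)=0$, i.e. $L_C,L'_C\in\ker d_2^{1,k-2}$.
   Context: Let $E$ be a complex elliptic curve, $x,y$ a basis of $H^1(E;\mathbb{Q})$ with $xy$ generating $H^2(E;\mathbb{Q})$. Let $C(n)=\{(P_1,\dots,P_n)\in E^n\mid P_i\neq P_j \text{ for } i\neq j\}$ be the complement of the braid elliptic arrangement. Let $E_2=E_2^{\bullet,\bullet}$ be the second page (with differential $d_2$) of the Leray spectral sequence, with rational coefficients, of the inclusion $C(n)\hookrightarrow E^n$. It is the bigraded differential algebra given as the quotient of the free graded-commutative algebra (graded commutative with respect to total degree $p+q$) over $\mathbb{Q}$ on generators $x_i,y_i$ ($1\le i\le n$) of bidegree $(1,0)$ and $\omega_{ij}=\omega_{ji}$ ($1\le i\neq j\le n$) of bidegree $(0,1)$ by the relations $(x_i-x_j)\omega_{ij}=0$, $(y_i-y_j)\omega_{ij}=0$, and $\omega_{ij}\omega_{jk}+\omega_{jk}\omega_{ki}+\omega_{ki}\omega_{ij}=0$ for distinct $i,j,k$; here $x_i,y_i$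 are the pullbacks of $x,y$ along the $i$-th projection $E^n\to E$. The differential $d_2$ has bidegree $(2,-1)$, is a derivation for the total degree (graded Leibniz rule), vanishes on $x_i,y_i$, and $d_2\omega_{ij}=(x_i-x_j)(y_i-y_j)$. A circuit of length $k\ge3$ in $K_n$ is a sequence $C=(c_1,\dots,c_k)$ of oriented edges, with source $s(c)$ and target $t(c)$, such that $t(c_i)=s(c_{i+1})$ for $i<k$, $t(c_k)=s(c_1)$ and the $s(c_i)$ are pairwise distinct. For an oriented edge $c$ put $\omega_c=\omega_{s(c),t(c)}$, and for a subsequence $C\setminus\{c_i,c_j\}$ let $\omega_{C\setminus\{c_i,c_j\}}$ be the product of the $\omega_{c_m}$, $m\notin\{i,j\}$, in increasing order of $m$. *)

From HB Require Import structures.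
From mathcomp Require Import all_boot all_order all_algebra.
Set Implicit Arguments. Unset Strict Implicit. Unset Printing Implicit Defensive.
Import Order.TTheory GRing.Theory Num.Theory.
Local Open Scope ring_scope.

(* Generators of the free graded-commutative algebra, for fixed n:
   inl (inl i) = x_i, inl (inr i) = y_i, inr p = omega_{p.1 p.2} with p.1 < p.2
   (one generator per unordered pair {i,j}, since omega_ij = omega_ji). *)
Definition Wpair (n : nat) := {p : 'I_n * 'I_n | (p.1 < p.2)%N}.
Definition Gen (n : nat) : finType := (('I_n + 'I_n) + Wpair n)%type.

(* All generators have total degree 1 (odd), so the free graded-commutative
   Q-algebra on them is the exterior algebra over Q.  An element is a rational
   function on the finite subsets (monomials) of generators; the monomial e_S
   is the wedge of the elements of S in increasing order of enum_rank. *)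
Notation Lam n := {ffun {set Gen n} -> rat}.

Definition basis_el n (S : {set Gen n}) : Lam n := [ffun U => (U == S)%:R].
Definition one n : Lam n := basis_el set0.
Definition sc n (r : rat) (v : Lam n) : Lam n := [ffun U => r * v U].
Definition gen n (g : Gen n) : Lam n := basis_el [set g].

(* sign of e_S /\ e_T = sgn S T e_(S u T) for disjoint S, T *)
Definition sgn n (S T : {set Gen n}) : rat :=
  (-1) ^+ #|[set p in setX S T | (enum_rank p.2 < enum_rank p.1)%N]|.

Definition lmul n (a b : Lam n) : Lam n :=
  [ffun U => \sum_(S : {set Gen n}) \sum_(T : {set Gen n} |
       (S :&: T == set0) && (S :|: T == U)) sgn S T * a S * b T].

Definition X n (i : 'I_n) : Lam n := gen (inl (inl i)).
Definition Y n (i : 'I_n) : Lam n := gen (inl (inr i)).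
(* omega_{ij} = omega_{ji}; (the value for i = j is never used) *)
Definition W n (i j : 'I_n) : Lam n :=
  oapp (fun q : Wpair n => gen (inr q)) 0
       (insub (if (i < j)%N then (i, j) else (j, i))).

Definition is_rel n (r : Lam n) : Prop :=
  (exists i j : 'I_n, i != j /\ r = lmul (X i - X j) (W i j)) \/
  (exists i j : 'I_n, i != j /\ r = lmul (Y i - Y j) (W i j)) \/
  (exists i j k : 'I_n, [/\ i != j, j != k & i != k] /\
     r = lmul (W i j) (W j k) + lmul (W j k) (W k i) + lmul (W k i) (W i j)).

Definition in_rel_ideal n (v : Lam n) : Prop :=
  exists (m : nat) (a r b : 'I_m -> Lam n),
    (forall l, is_rel (r l)) /\ v = \sum_(l < m) lmul (lmul (a l) (r l)) (b l).

Definition dgen n (g : Gen n) : Lam n :=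
  match g with
  | inl _ => 0
  | inr q => lmul (X (val q).1 - X (val q).2) (Y (val q).1 - Y (val q).2)
  end.

(* the unique derivation (graded Leibniz rule for the total degree) extending
   dgen: since every d(g) has even degree 2,
   d(g_1 ... g_m) = sum_l (-1)^(l-1) d(g_l) g_1 .. ^g_l .. g_m. *)
Definition dbasis n (S : {set Gen n}) : Lam n :=
  \sum_(g in S) sc ((-1) ^+ #|[set h in S | (enum_rank h < enum_rank g)%N]|)
                (lmul (dgen g) (basis_el (S :\ g))).

Definition d2 n (v : Lam n) : Lam n := \sum_(S : {set Gen n}) sc (v S) (dbasis S).

(* A circuit of length k in K_n: oriented edges c_m = (s(c_m), t(c_m)) with
   s <> t, t(c_m) = s(c_{m+1}) cyclically, sources pairwise distinct.
   Indices are 0-based: c_0, ..., c_{k-1}. *)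
Definition is_circuit n k (c : 'I_k -> 'I_n * 'I_n) : Prop :=
  [/\ (3 <= k)%N,
      forall m, (c m).1 != (c m).2,
      forall m, (c m).2 = (c (ordS m)).1 &
      injective (fun m => (c m).1)].

Definition omega_edge n (e : 'I_n * 'I_n) : Lam n := W e.1 e.2.

(* omega_{C \ {c_i, c_j}}: product in increasing order of the remaining indices *)
Definition omega_minus n k (c : 'I_k -> 'I_n * 'I_n) (i j : 'I_k) : Lam n :=
  \big[@lmul n/one n]_(m < k | (m != i) && (m != j)) omega_edge (c m).

(* (shifting indices by one does not change the parity of i + j) *)
Definition L_C n k (c : 'I_k -> 'I_n * 'I_n) : Lam n :=
  \sum_(i < k) \sum_(j < k | (i < j)%N) sc ((-1) ^+ (i + j))
     (lmul (X (c i).2 - X (c i).1) (omega_minus c i j)).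

Definition L'_C n k (c : 'I_k -> 'I_n * 'I_n) : Lam n :=
  \sum_(i < k) \sum_(j < k | (i < j)%N) sc ((-1) ^+ (i + j))
     (lmul (Y (c i).2 - Y (c i).1) (omega_minus c i j)).

(* The x-differences f_l = x_{t(c_l)} - x_{s(c_l)} and y-differences g_l along the
   edges of the circuit satisfy d2 omega_{c_l} = f_l g_l and d2 f_l = 0, they sum to
   zero because the circuit closes up, and f_l omega_{c_l}, g_l omega_{c_l} are
   relations.  As every d2 omega is central of even degree, the Leibniz rule writes
   d2 L_C as a signed sum, over pairs i < j and a third index m, of
   f_i f_m g_m omega_{C \ {c_i, c_j, c_m}}.  The three terms belonging to a triple
   p < q < r combine, using f_p f_p = 0 and anticommutativity, into
     f_p (f_p + f_q + f_r) g_r Omega - f_p f_q (g_p + g_q + g_r) Omega,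
   Omega = omega_{C \ {c_p, c_q, c_r}}.  Now f_p + f_q + f_r is minus the sum of the
   f_l over the remaining edges, and each f_l Omega lies in the ideal because
   omega_{c_l} is a factor of Omega; the same holds for g.  For L'_C the roles are
   played by the y-differences and the negated x-differences. *)

From Pilot Require Import Defs.
From HB Require Import structures.
From mathcomp Require Import all_boot all_order all_algebra.
From mathcomp Require Import zify.
Set Implicit Arguments. Unset Strict Implicit. Unset Printing Implicit Defensive.
Import GRing.Theory Num.Theory.
Local Open Scope ring_scope.

(** * The exterior algebra *)

Section ExteriorAlgebra.
Variable n : nat.
Local Notation L := (Lam n).
Local Notation G := (Gen n).
Local Notation e := (@basis_el n).
Implicit Types (a b c u v w : L) (S T U : {set G}) (g h : G).

Definition inversions S T : nat :=
  \sum_(s in S) \sum_(t in T) (enum_rank t < enum_rank s)%N.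

Lemma sgnE S T : sgn S T = (-1) ^+ inversions S T.
Proof.
rewrite /sgn -sum1dep_card /inversions pair_big_dep /=; congr (_ ^+ _).
rewrite big_mkcond [RHS]big_mkcond; apply: eq_bigr => -[s t] _.
by rewrite !inE /=; case: (s \in S); case: (t \in T); case: (_ < _)%N.
Qed.

Lemma inversions0l T : inversions set0 T = 0%N.
Proof. by rewrite /inversions big_set0. Qed.

Lemma inversions0r S : inversions S set0 = 0%N.
Proof. by rewrite /inversions big1 // => s _; rewrite big_set0. Qed.

Lemma inversionsUl S1 S2 T : [disjoint S1 & S2] ->
  inversions (S1 :|: S2) T = (inversions S1 T + inversions S2 T)%N.
Proof. by move=> dS; rewrite /inversions -bigU //; apply: eq_bigl => s; rewrite !inE. Qed.

Lemma inversionsUr S T1 T2 : [disjoint T1 & T2] ->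
  inversions S (T1 :|: T2) = (inversions S T1 + inversions S T2)%N.
Proof.
move=> dT; rewrite /inversions -big_split /=; apply: eq_bigr => s _.
by rewrite -bigU //; apply: eq_bigl => t; rewrite !inE.
Qed.

Lemma inversionsC S T : [disjoint S & T] ->
  (inversions S T + inversions T S)%N = (#|S| * #|T|)%N.
Proof.
move=> dST; rewrite /inversions [X in (_ + X)%N]exchange_big -big_split /=.
rewrite -[#|S|]sum1_card big_distrl /=; apply: eq_bigr => s sS.
rewrite -big_split mul1n -[#|T|]sum1_card; apply: eq_bigr => t tT /=.
have /negbTE nts : enum_rank t != enum_rank s.
  by rewrite (inj_eq enum_rank_inj); apply: contraTneq tT => ->; rewrite (disjointFr dST).
by move: nts; rewrite -val_eqE /=; case: ltngtP.
Qed.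

Lemma sgn0l T : sgn set0 T = 1.
Proof. by rewrite sgnE inversions0l. Qed.

Lemma sgn0r S : sgn S set0 = 1.
Proof. by rewrite sgnE inversions0r. Qed.

Lemma sgnUl S1 S2 T : [disjoint S1 & S2] -> sgn (S1 :|: S2) T = sgn S1 T * sgn S2 T.
Proof. by move=> dS; rewrite !sgnE inversionsUl // exprD. Qed.

Lemma sgnUr S T1 T2 : [disjoint T1 & T2] -> sgn S (T1 :|: T2) = sgn S T1 * sgn S T2.
Proof. by move=> dT; rewrite !sgnE inversionsUr // exprD. Qed.

Lemma sgnC S T : [disjoint S & T] -> sgn S T = (-1) ^+ (#|S| * #|T|) * sgn T S.
Proof.
move=> dST; rewrite -inversionsC // !sgnE exprD -mulrA -exprD.
by rewrite addnn -[X in _ * X]signr_odd odd_double mulr1.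
Qed.

Lemma sc_sumr r I (s : seq I) (P : pred I) (F : I -> L) :
  sc r (\sum_(i <- s | P i) F i) = \sum_(i <- s | P i) sc r (F i).
Proof.
apply: (big_morph (sc r)) => [u v|]; apply/ffunP => U; rewrite !ffunE ?mulrDr ?mulr0 //.
Qed.

Lemma scA r1 r2 v : sc r1 (sc r2 v) = sc (r1 * r2) v.
Proof. by apply/ffunP => U; rewrite !ffunE mulrA. Qed.

Lemma sc1 v : sc 1 v = v.
Proof. by apply/ffunP => U; rewrite !ffunE mul1r. Qed.

Lemma sc0l v : sc 0 v = 0.
Proof. by apply/ffunP => U; rewrite !ffunE mul0r. Qed.

Lemma sc0r r : sc r (0 : L) = 0.
Proof. by apply/ffunP => U; rewrite !ffunE mulr0. Qed.

Lemma scN1 v : sc (-1) v = - v.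
Proof. by apply/ffunP => U; rewrite !ffunE mulN1r. Qed.

Lemma scDr r u v : sc r (u + v) = sc r u + sc r v.
Proof. by apply/ffunP => U; rewrite !ffunE mulrDr. Qed.

Lemma scBr r u v : sc r (u - v) = sc r u - sc r v.
Proof. by apply/ffunP => U; rewrite !ffunE mulrBr. Qed.

Lemma scNl r v : sc (- r) v = - sc r v.
Proof. by rewrite -scN1 scA mulN1r. Qed.

Lemma basis_decomp u : u = \sum_S sc (u S) (e S).
Proof.
apply/ffunP => U; rewrite sum_ffunE (bigD1 U) //= big1 => [|S /negbTE nSU].
  by rewrite !ffunE eqxx mulr1 addr0.
by rewrite !ffunE eq_sym nSU mulr0.
Qed.

Lemma lmulE a b U : lmul a b U = \sum_S \sum_T
  (if (S :&: T == set0) && (S :|: T == U) then sgn S T * a S * b T else 0).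
Proof. by rewrite ffunE; apply: eq_bigr => S _; rewrite big_mkcond. Qed.

Lemma lmulDl a b c : lmul (a + b) c = lmul a c + lmul b c.
Proof.
apply/ffunP => U; rewrite [RHS]ffunE !lmulE -big_split /=; apply: eq_bigr => S _.
rewrite -big_split /=; apply: eq_bigr => T _; case: ifP => _; last by rewrite addr0.
by rewrite ffunE mulrDr mulrDl.
Qed.

Lemma lmulDr a b c : lmul a (b + c) = lmul a b + lmul a c.
Proof.
apply/ffunP => U; rewrite [RHS]ffunE !lmulE -big_split /=; apply: eq_bigr => S _.
rewrite -big_split /=; apply: eq_bigr => T _; case: ifP => _; last by rewrite addr0.
by rewrite ffunE mulrDr.
Qed.

Lemma lmulZl r a b : lmul (sc r a) b = sc r (lmul a b).
Proof.
apply/ffunP => U; rewrite [RHS]ffunE !lmulE mulr_sumr; apply: eq_bigr => S _.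
rewrite mulr_sumr; apply: eq_bigr => T _; case: ifP => _; last by rewrite mulr0.
by rewrite ffunE mulrCA !mulrA.
Qed.

Lemma lmulZr r a b : lmul a (sc r b) = sc r (lmul a b).
Proof.
apply/ffunP => U; rewrite [RHS]ffunE !lmulE mulr_sumr; apply: eq_bigr => S _.
rewrite mulr_sumr; apply: eq_bigr => T _; case: ifP => _; last by rewrite mulr0.
by rewrite ffunE mulrCA.
Qed.

Lemma lmul0l a : lmul 0 a = 0.
Proof. by apply: (@addrI _ (lmul 0 a)); rewrite -lmulDl !addr0. Qed.

Lemma lmul0r a : lmul a 0 = 0.
Proof. by apply: (@addrI _ (lmul a 0)); rewrite -lmulDr !addr0. Qed.

Lemma lmulNl a b : lmul (- a) b = - lmul a b.
Proof. by apply/eqP; rewrite -subr_eq0 opprK -lmulDl addNr lmul0l. Qed.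

Lemma lmulNr a b : lmul a (- b) = - lmul a b.
Proof. by apply/eqP; rewrite -subr_eq0 opprK -lmulDr addNr lmul0r. Qed.

Lemma lmul_suml I (s : seq I) (P : pred I) (F : I -> L) b :
  lmul (\sum_(i <- s | P i) F i) b = \sum_(i <- s | P i) lmul (F i) b.
Proof. by apply: (big_morph (fun x => lmul x b)) => [u v|]; rewrite ?lmulDl ?lmul0l. Qed.

Lemma lmul_sumr I (s : seq I) (P : pred I) (F : I -> L) a :
  lmul a (\sum_(i <- s | P i) F i) = \sum_(i <- s | P i) lmul a (F i).
Proof. by apply: (big_morph (lmul a)) => [u v|]; rewrite ?lmulDr ?lmul0r. Qed.

Lemma lmul_basis S T : lmul (e S) (e T) =
  if S :&: T == set0 then sc (sgn S T) (e (S :|: T)) else 0.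
Proof.
apply/ffunP => U; rewrite lmulE (bigD1 S) //= [X in _ + X]big1 => [|S' /negbTE nS]; last first.
  by apply: big1 => T' _; rewrite !ffunE nS mulr0 mul0r; case: ifP.
rewrite addr0 (bigD1 T) //= [X in _ + X]big1 => [|T' /negbTE nT]; last first.
  by rewrite !ffunE nT mulr0; case: ifP.
rewrite !ffunE !eqxx !mulr1 addr0; case: (S :&: T == set0); rewrite !ffunE /= ?mulr0 //.
by rewrite eq_sym; case: (U == _); rewrite ?mulr1 ?mulr0.
Qed.

Lemma lmul_basisA S T U :
  lmul (lmul (e S) (e T)) (e U) = lmul (e S) (lmul (e T) (e U)).
Proof.
rewrite !lmul_basis; case dST: (S :&: T == set0); last first.
  rewrite lmul0l; case: (T :&: U == set0); last by rewrite lmul0r.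
  by rewrite lmulZr lmul_basis setIUr setU_eq0 dST sc0r.
case dTU: (T :&: U == set0); last first.
  by rewrite lmul0r lmulZl lmul_basis setIUl setU_eq0 dTU andbF sc0r.
rewrite lmulZl lmulZr !lmul_basis setIUl setIUr !setU_eq0 dST dTU andbT setUA.
case dSU: (S :&: U == set0); last by rewrite !sc0r.
by rewrite !scA sgnUl ?sgnUr -?setI_eq0 // [in RHS]mulrC -mulrA.
Qed.

Lemma lmulA a b c : lmul (lmul a b) c = lmul a (lmul b c).
Proof.
rewrite (basis_decomp a) !lmul_suml; apply: eq_bigr => S _.
rewrite !lmulZl; congr (sc _ _).
rewrite (basis_decomp b) lmul_sumr !lmul_suml lmul_sumr; apply: eq_bigr => T _.
rewrite lmulZr !lmulZl lmulZr; congr (sc _ _).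
rewrite (basis_decomp c) !lmul_sumr; apply: eq_bigr => U _.
by rewrite !lmulZr lmul_basisA.
Qed.

Lemma lmul1l a : lmul (Defs.one n) a = a.
Proof.
rewrite [in LHS](basis_decomp a) [in RHS](basis_decomp a) lmul_sumr; apply: eq_bigr => S _.
by rewrite lmulZr lmul_basis set0I eqxx sgn0l sc1 set0U.
Qed.

Lemma lmul1r a : lmul a (Defs.one n) = a.
Proof.
rewrite [in LHS](basis_decomp a) [in RHS](basis_decomp a) lmul_suml; apply: eq_bigr => S _.
by rewrite lmulZl lmul_basis setI0 eqxx sgn0r sc1 setU0.
Qed.

Definition homog (p : nat) u := forall S, u S != 0 -> #|S| = p.

Lemma homog0 p : homog p 0.
Proof. by move=> S; rewrite ffunE eqxx. Qed.

Lemma homogD p u v : homog p u -> homog p v -> homog p (u + v).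
Proof.
move=> hu hv S; rewrite ffunE; have [uS0|/hu//] := eqVneq (u S) 0.
by rewrite uS0 add0r; exact: hv.
Qed.

Lemma homogN p u : homog p u -> homog p (- u).
Proof. by move=> hu S; rewrite ffunE oppr_eq0; exact: hu. Qed.

Lemma homogB p u v : homog p u -> homog p v -> homog p (u - v).
Proof. by move=> hu hv; apply: homogD => //; exact: homogN. Qed.

Lemma homogZ p r u : homog p u -> homog p (sc r u).
Proof. by move=> hu S; rewrite ffunE mulf_eq0 negb_or => /andP[_ /hu]. Qed.

Lemma homog_sum p I (s : seq I) (P : pred I) (F : I -> L) :
  (forall i, P i -> homog p (F i)) -> homog p (\sum_(i <- s | P i) F i).
Proof.
by move=> hF; elim/big_rec: _ => [|i u Pi hu]; [exact: homog0 | apply: homogD; first exact: hF].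
Qed.

Lemma homog_basis S : homog #|S| (e S).
Proof. by move=> T; rewrite ffunE pnatr_eq0 eqb0 negbK => /eqP->. Qed.

Lemma homog_gen g : homog 1 (gen g).
Proof. by rewrite -(cards1 g); exact: homog_basis. Qed.

Lemma homogM p q u v : homog p u -> homog q v -> homog (p + q) (lmul u v).
Proof.
move=> hu hv U; apply: contraNeq => pqU; rewrite lmulE big1 // => S _; rewrite big1 // => T _.
case: ifP => // /andP[/eqP dST /eqP eU].
have [uS0|/hu uS] := eqVneq (u S) 0; first by rewrite uS0 mulr0 mul0r.
have [vT0|/hv vT] := eqVneq (v T) 0; first by rewrite vT0 mulr0.
by move: pqU; rewrite -eU cardsU dST cards0 subn0 uS vT eqxx.
Qed.

Lemma lmul_homogC p q u v : homog p u -> homog q v ->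
  lmul u v = sc ((-1) ^+ (p * q)) (lmul v u).
Proof.
move=> hu hv; apply/ffunP => U; rewrite [RHS]ffunE !lmulE [in RHS]exchange_big mulr_sumr.
apply: eq_bigr => S _; rewrite mulr_sumr; apply: eq_bigr => T _.
rewrite setIC setUC; case: ifP => [/andP[dTS _]|_]; last by rewrite mulr0.
have [uS0|/hu uS] := eqVneq (u S) 0; first by rewrite uS0 !(mulr0, mul0r).
have [vT0|/hv vT] := eqVneq (v T) 0; first by rewrite vT0 !(mulr0, mul0r).
by rewrite (@sgnC T S) -?setI_eq0 // uS vT mulnC !mulrA -expr2 sqrr_sign mul1r mulrAC.
Qed.

Lemma lmul_oddC u v : homog 1 u -> homog 1 v -> lmul u v = - lmul v u.
Proof. by move=> hu hv; rewrite (lmul_homogC hu hv) scN1. Qed.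

Lemma lmul_odd_sqr u : homog 1 u -> lmul u u = 0.
Proof.
move=> hu; apply/ffunP => U; apply/eqP.
have /ffunP/(_ U) uuU := lmul_oddC hu hu; rewrite [RHS]ffunE in uuU.
by rewrite [X in _ == X]ffunE -eqNr -uuU.
Qed.

Lemma lmul_evenC q u v : homog 2 u -> homog q v -> lmul u v = lmul v u.
Proof. by move=> hu hv; rewrite (lmul_homogC hu hv) -signr_odd oddM /= sc1. Qed.

(** * The differential *)

Lemma d2_is_zmod_morphism : zmod_morphism (@d2 n).
Proof.
move=> u v; rewrite /d2 -sumrB; apply: eq_bigr => S _.
by apply/ffunP => U; rewrite !ffunE mulrBl.
Qed.

HB.instance Definition _ :=
  GRing.isZmodMorphism.Build L L (@d2 n) d2_is_zmod_morphism.

Lemma d2Z r u : d2 (sc r u) = sc r (d2 u).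
Proof. by rewrite /d2 sc_sumr; apply: eq_bigr => S _; rewrite ffunE scA. Qed.

Lemma d2_basis S : d2 (e S) = dbasis S.
Proof.
rewrite /d2 (bigD1 S) //= big1 => [|T /negbTE nTS]; first by rewrite ffunE eqxx sc1 addr0.
by rewrite ffunE nTS sc0l.
Qed.

Lemma d2_one : d2 (Defs.one n) = 0.
Proof. by rewrite d2_basis /dbasis big_set0. Qed.

Lemma d2_gen g : d2 (gen g) = dgen g.
Proof.
rewrite d2_basis /dbasis big_set1 setDv.
rewrite (_ : #|_| = 0%N) ?expr0 ?sc1 ?lmul1r //.
by apply: eq_card0 => h; rewrite !inE; case: eqP => // ->; rewrite ltnn.
Qed.

Lemma homog_dgen g : homog 2 (dgen g).
Proof.
case: g => [g|q]; first exact: homog0.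
by apply: (@homogM 1 1); apply: homogB; apply: homog_gen.
Qed.

Local Notation below T g := #|[set h in T | (enum_rank h < enum_rank g)%N]|.

Lemma sgn_set1 g T : sgn [set g] T = (-1) ^+ below T g.
Proof.
rewrite sgnE /inversions big_set1 -sum1dep_card; congr (_ ^+ _).
by rewrite big_mkcondr; apply: eq_bigr => h _; case: (_ < _)%N.
Qed.

Lemma lmul_gen_basis g T : lmul (gen g) (e T) =
  if g \in T then 0 else sc ((-1) ^+ below T g) (e (g |: T)).
Proof. by rewrite lmul_basis setI_eq0 disjoints1 sgn_set1; case: (g \in T). Qed.

Lemma below_setD1 g h T : h \in T ->
  below T g = ((enum_rank h < enum_rank g) + below (T :\ h) g)%N.
Proof.
move=> hT; rewrite (cardsD1 h) !inE hT /=; congr (_ + _)%N.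
by apply: eq_card => x; rewrite !inE andbA.
Qed.

Lemma below_setU1 g h T : g \notin T ->
  below (g |: T) h = ((enum_rank g < enum_rank h) + below T h)%N.
Proof.
move=> gT; rewrite (cardsD1 g) !inE eqxx /=; congr (_ + _)%N.
apply: eq_card => x; rewrite !inE; case: eqP => [->|] /=; by rewrite ?(negbTE gT).
Qed.

Lemma below_setD1_self g T : below (T :\ g) g = below T g.
Proof. by apply: eq_card => x; rewrite !inE; case: eqP => [->|]; rewrite ?ltnn ?andbF. Qed.

Lemma dgen_lmul_gen g h w :
  lmul (dgen h) (lmul (gen g) w) = lmul (gen g) (lmul (dgen h) w).
Proof. by rewrite -!lmulA (lmul_evenC (@homog_dgen h) (@homog_gen g)). Qed.

Lemma sign_sqr (m : nat) : (-1) ^+ m * (-1) ^+ m = 1 :> rat.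
Proof. by rewrite -expr2 sqrr_sign. Qed.

Lemma sign_rank_swap g h : g != h ->
  (-1) ^+ ((enum_rank g < enum_rank h) + (enum_rank h < enum_rank g))%N = -1 :> rat.
Proof.
move=> ngh; case: ltngtP => //= /val_inj/enum_rank_inj eq_gh.
by rewrite eq_gh eqxx in ngh.
Qed.

Lemma lmul_gen_dbasis_mem g T : g \in T ->
  lmul (gen g) (dbasis T) = lmul (dgen g) (e T).
Proof.
move=> gT; rewrite /dbasis lmul_sumr (bigD1 g) //= big1 ?addr0 => [|h /andP[hT ngh]].
  rewrite lmulZr -dgen_lmul_gen lmul_gen_basis !inE eqxx /= lmulZr scA.
  by rewrite below_setD1_self sign_sqr sc1 setD1K.
by rewrite lmulZr -dgen_lmul_gen lmul_gen_basis !inE eq_sym ngh gT lmul0r sc0r.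
Qed.

Lemma d2_lmul_gen_basis g T :
  d2 (lmul (gen g) (e T)) = lmul (dgen g) (e T) - lmul (gen g) (dbasis T).
Proof.
rewrite lmul_gen_basis; have [gT|gT] := boolP (g \in T).
  by rewrite raddf0 lmul_gen_dbasis_mem ?subrr.
rewrite d2Z d2_basis /dbasis big_setU1 //= setU1K // below_setU1 // ltnn add0n.
rewrite scDr scA sign_sqr sc1; congr (_ + _).
rewrite sc_sumr lmul_sumr -sumrN; apply: eq_bigr => h hT.
have ngh : g != h by apply: contraNneq gT => ->.
have -> : (g |: T) :\ h = g |: (T :\ h).
  by apply/setP => x; rewrite !inE; case: eqP => [->|] //=; rewrite eq_sym (negbTE ngh).
rewrite lmulZr -dgen_lmul_gen lmul_gen_basis !inE (negbTE gT) andbF.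
rewrite lmulZr !scA -scNl; congr (sc _ _).
have nhg : h != g by rewrite eq_sym.
rewrite below_setU1 // (below_setD1 g hT) !exprD mulrACA -exprD (sign_rank_swap nhg).
by rewrite mulN1r mulrC.
Qed.

Lemma d2_lmul_gen g v : d2 (lmul (gen g) v) = lmul (dgen g) v - lmul (gen g) (d2 v).
Proof.
rewrite (basis_decomp v) lmul_sumr raddf_sum lmul_sumr raddf_sum lmul_sumr -sumrB.
apply: eq_bigr => S _ /=.
by rewrite !lmulZr !d2Z d2_lmul_gen_basis d2_basis lmulZr scBr.
Qed.

Lemma d2_lmul_odd u v : homog 1 u ->
  d2 (lmul u v) = lmul (d2 u) v - lmul u (d2 v).
Proof.
move=> hu; rewrite (basis_decomp u) lmul_suml raddf_sum raddf_sum !lmul_suml -sumrB.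
apply: eq_bigr => S _ /=; have [->|/hu/eqP/cards1P[g ->]] := eqVneq (u S) 0.
  by rewrite !sc0l lmul0l raddf0 !lmul0l subrr.
by rewrite -/(gen g) !lmulZl !d2Z !lmulZl d2_lmul_gen d2_gen scBr.
Qed.

End ExteriorAlgebra.

(** * The ideal of relations *)

Section RelationIdeal.
Variable n : nat.
Local Notation L := (Lam n).
Local Notation I := (@in_rel_ideal n).
Implicit Types (u v w : L).

Lemma rel_ideal0 : I 0.
Proof. by exists 0%N, (fun=> 0), (fun=> 0), (fun=> 0); split=> [[]//|]; rewrite big_ord0. Qed.

Lemma rel_idealD u v : I u -> I v -> I (u + v).
Proof.
move=> [m1 [a1 [r1 [b1 [hr1 ->]]]]] [m2 [a2 [r2 [b2 [hr2 ->]]]]].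
pose glue (f1 : 'I_m1 -> L) (f2 : 'I_m2 -> L) l :=
  match split l with inl l1 => f1 l1 | inr l2 => f2 l2 end.
exists (m1 + m2)%N, (glue a1 a2), (glue r1 r2), (glue b1 b2); split.
  by move=> l; rewrite /glue; case: (split l).
by rewrite big_split_ord /glue; congr (_ + _); apply: eq_bigr => l _;
  rewrite ?(unsplitK (inl _)) ?(unsplitK (inr _)).
Qed.

Lemma rel_idealMl w u : I u -> I (lmul w u).
Proof.
move=> [m [a [r [b [hr ->]]]]]; exists m, (fun l => lmul w (a l)), r, b; split=> //.
by rewrite lmul_sumr; apply: eq_bigr => l _; rewrite !lmulA.
Qed.

Lemma rel_idealMr w u : I u -> I (lmul u w).
Proof.
move=> [m [a [r [b [hr ->]]]]]; exists m, a, r, (fun l => lmul (b l) w); split=> //.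
by rewrite lmul_suml; apply: eq_bigr => l _; rewrite !lmulA.
Qed.

Lemma rel_idealZ x u : I u -> I (sc x u).
Proof.
move=> [m [a [r [b [hr ->]]]]]; exists m, (fun l => sc x (a l)), r, b; split=> //.
by rewrite sc_sumr; apply: eq_bigr => l _; rewrite !lmulZl.
Qed.

Lemma rel_idealN u : I u -> I (- u).
Proof. by rewrite -scN1; exact: rel_idealZ. Qed.

Lemma rel_idealB u v : I u -> I v -> I (u - v).
Proof. by move=> Iu Iv; apply: rel_idealD => //; exact: rel_idealN. Qed.

Lemma rel_ideal_sum J (s : seq J) (P : pred J) (F : J -> L) :
  (forall j, P j -> I (F j)) -> I (\sum_(j <- s | P j) F j).
Proof.
move=> IF; elim/big_rec: _ => [|j u Pj Iu]; first exact: rel_ideal0.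
by apply: rel_idealD => //; exact: IF.
Qed.

Lemma rel_ideal_rel r : is_rel r -> I r.
Proof.
move=> hr; exists 1%N, (fun=> Defs.one n), (fun=> r), (fun=> Defs.one n); split=> //.
by rewrite big_ord1 lmul1l lmul1r.
Qed.

End RelationIdeal.

(** * Circuit sums *)

Section OddProducts.
Variable n : nat.
Local Notation L := (Lam n).
Local Notation I := (@in_rel_ideal n).
Implicit Types (u : L).

Lemma homog_d2 u : homog 1 u -> homog 2 (d2 u).
Proof.
move=> hu; apply: homog_sum => S _; have [->|/hu/eqP/cards1P[g ->]] := eqVneq (u S) 0.
  by rewrite sc0l; exact: homog0.
by apply: homogZ; rewrite -d2_basis d2_gen; exact: homog_dgen.
Qed.

Lemma d2_big_lmul (J : eqType) (r : seq J) (P : pred J) (F : J -> L) :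
  (forall y, homog 1 (F y)) -> uniq r ->
  d2 (\big[@lmul n/Defs.one n]_(y <- r | P y) F y) =
  \sum_(x <- r | P x) sc ((-1) ^+ count P (take (index x r) r))
     (lmul (d2 (F x)) (\big[@lmul n/Defs.one n]_(y <- r | P y && (y != x)) F y)).
Proof.
move=> hF; elim: r => [|a r IHr]; first by rewrite !big_nil d2_one.
rewrite cons_uniq => /andP[ar ur].
have drop_a : \big[@lmul n/Defs.one n]_(y <- r | P y && (y != a)) F y =
              \big[@lmul n/Defs.one n]_(y <- r | P y) F y.
  rewrite big_seq_cond [RHS]big_seq_cond; apply: eq_bigl => y.
  by case: (boolP (y \in r)) => //= yr; rewrite (memPn ar y yr) andbT.
have shift : \sum_(x <- r | P x) sc ((-1) ^+ count P (take (index x (a :: r)) (a :: r)))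
    (lmul (d2 (F x)) (\big[@lmul n/Defs.one n]_(y <- a :: r | P y && (y != x)) F y)) =
  \sum_(x <- r | P x) sc ((-1) ^+ (P a + count P (take (index x r) r))%N)
    (lmul (d2 (F x)) (if P a then lmul (F a)
       (\big[@lmul n/Defs.one n]_(y <- r | P y && (y != x)) F y)
     else \big[@lmul n/Defs.one n]_(y <- r | P y && (y != x)) F y)).
  rewrite big_seq_cond [RHS]big_seq_cond; apply: eq_bigr => x /andP[xr _] /=.
  have nax : a != x by rewrite eq_sym (memPn ar x xr).
  by rewrite (negbTE nax) /= big_cons nax andbT.
rewrite !big_cons shift /= eqxx andbF /= expr0 sc1 drop_a; case: (P a).
  rewrite d2_lmul_odd // IHr // lmul_sumr -sumrN; congr (_ + _).
  apply: eq_bigr => x Px; rewrite exprS lmulZr -scN1 scA mulN1r; congr (sc _ _).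
  by rewrite -!lmulA (lmul_evenC (homog_d2 (hF x)) (hF a)).
by rewrite IHr.
Qed.

Lemma rel_ideal_big_lmul (J : eqType) (r : seq J) (P : pred J) (F : J -> L) u x :
  (forall y, homog 1 (F y)) -> homog 1 u -> x \in r -> P x -> I (lmul u (F x)) ->
  I (lmul u (\big[@lmul n/Defs.one n]_(y <- r | P y) F y)).
Proof.
move=> hF hu; elim: r => [|a r IHr] //= xr Px Ix; rewrite big_cons.
have [<-|nxa] := eqVneq x a; first by rewrite Px -lmulA; exact: rel_idealMr.
have {}xr : x \in r by move: xr; rewrite inE (negbTE nxa).
case: (P a); last exact: IHr.
rewrite -lmulA (lmul_oddC hu (hF a)) lmulNl lmulA.
by apply/rel_idealN/rel_idealMl; exact: IHr.
Qed.

End OddProducts.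

Lemma count_avoid2_iota (i j m : nat) : i != j ->
  (count (fun l => (l != i) && (l != j)) (iota 0 m) + (i < m) + (j < m))%N = m.
Proof.
move=> nij; elim: m => [|m IHm] //.
rewrite -addn1 iotaD count_cat /= add0n addn0 addn1.
by move: IHm; case: (ltngtP i m); case: (ltngtP j m) => //=; lia.
Qed.

Lemma count_avoid2_take_ord k (i j m : 'I_k) : i != j ->
  (count (fun l : 'I_k => (l != i) && (l != j))
     (take (index m (index_enum 'I_k)) (index_enum 'I_k)) + (i < m) + (j < m))%N = m.
Proof.
move=> nij; have -> : index_enum 'I_k = enum 'I_k.
  by rewrite enumT /index_enum; case: index_enum_key.
rewrite index_enum_ord -[in RHS](count_avoid2_iota m nij).
have -> : iota 0 m = map val (take m (enum 'I_k)).
  by rewrite map_take val_enum_ord take_iota (minn_idPl (ltnW (ltn_ord m))).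
by rewrite count_map.
Qed.

Section TripleSums.
Variables (V : zmodType) (k : nat).
Implicit Types F G H : 'I_k -> 'I_k -> 'I_k -> V.

Lemma sum3D F G H :
  \sum_(i < k) \sum_(j < k) \sum_(m < k) (F i j m + G i j m + H i j m) =
  \sum_(i < k) \sum_(j < k) \sum_(m < k) F i j m +
  \sum_(i < k) \sum_(j < k) \sum_(m < k) G i j m +
  \sum_(i < k) \sum_(j < k) \sum_(m < k) H i j m.
Proof.
rewrite -!big_split; apply: eq_bigr => i _; rewrite -!big_split.
by apply: eq_bigr => j _; rewrite -!big_split.
Qed.

Lemma sum_pairs_avoid F :
  \sum_(i < k) \sum_(j < k | (i < j)%N) \sum_(m < k | (m != i) && (m != j)) F i j m =
  \sum_(p < k) \sum_(q < k | (p < q)%N) \sum_(r < k | (q < r)%N)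
     (F p q r + F p r q + F q r p).
Proof.
pose cond (b : bool) (v : V) := if b then v else 0.
transitivity (\sum_(i < k) \sum_(j < k) \sum_(m < k)
   (cond (i < j < m)%N (F i j m) + cond (i < m < j)%N (F i j m) +
    cond (m < i < j)%N (F i j m))).
  apply: eq_bigr => i _; rewrite big_mkcond; apply: eq_bigr => j _ /=.
  case: ifPn => ij; [rewrite big_mkcond; apply: eq_bigr | apply/esym/big1] => m _ /=;
    rewrite /cond -?(inj_eq val_inj) /=; move: ij;
    case: (ltngtP i j) => ij; case: (ltngtP i m) => im; case: (ltngtP j m) => jm //=;
    rewrite ?addr0 ?add0r //; lia.
transitivity (\sum_(p < k) \sum_(q < k) \sum_(r < k)
   (cond (p < q < r)%N (F p q r) + cond (p < q < r)%N (F p r q) +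
    cond (p < q < r)%N (F q r p))); last first.
  apply: eq_bigr => p _; rewrite [RHS]big_mkcond; apply: eq_bigr => q _ /=.
  case: ifPn => pq; [rewrite [RHS]big_mkcond; apply: eq_bigr | apply: big1] => r _;
    by rewrite /cond ?pq ?(negbTE pq) /=; case: (q < r)%N; rewrite ?addr0.
rewrite !sum3D; congr (_ + _ + _).
  apply: eq_bigr => i _; rewrite exchange_big; apply: eq_bigr => m _.
  exact: eq_bigr.
under eq_bigr => i _ do rewrite exchange_big.
by rewrite exchange_big.
Qed.

End TripleSums.

Lemma big_split3 (V : zmodType) k (h : 'I_k -> V) p q r :
  p != q -> q != r -> p != r ->
  \sum_(l < k) h l = h p + h q + h r + \sum_(l < k | [&& l != p, l != q & l != r]) h l.
Proof.
move=> npq nqr npr; rewrite (bigD1 p) //= (bigD1 q) /=; last by rewrite eq_sym.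
rewrite (bigD1 r) /=; last by rewrite eq_sym npr eq_sym nqr.
by rewrite !addrA; congr (_ + _); apply: eq_bigl => l; rewrite andbA.
Qed.

Lemma triple_bracket n (a b c a' b' c' w : Lam n) : homog 1 a -> homog 1 b ->
  lmul a (lmul (lmul c c') w) - lmul a (lmul (lmul b b') w) + lmul b (lmul (lmul a a') w) =
  lmul a (lmul (a + b + c) (lmul c' w)) - lmul a (lmul b (lmul (a' + b' + c') w)).
Proof.
move=> ha hb; rewrite !lmulDl !lmulDr !lmulA.
rewrite -[lmul a (lmul a _)]lmulA lmul_odd_sqr // lmul0l add0r.
rewrite -[lmul b (lmul a _)]lmulA (lmul_oddC hb ha) lmulNl lmulA.
set t1 := lmul a (lmul b (lmul c' w)).
by rewrite [_ + t1]addrC opprD addrA [t1 + _]addrC addrK opprD addrA addrAC.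
Qed.

Section CircuitClass.
Variables (n k : nat) (om f g : 'I_k -> Lam n).
Local Notation L := (Lam n).
Local Notation I := (@in_rel_ideal n).
Hypotheses (om_odd : forall l, homog 1 (om l)) (f_odd : forall l, homog 1 (f l))
  (g_odd : forall l, homog 1 (g l))
  (sum_f : \sum_(l < k) f l = 0) (sum_g : \sum_(l < k) g l = 0)
  (rel_f : forall l, I (lmul (f l) (om l))) (rel_g : forall l, I (lmul (g l) (om l)))
  (d2_om : forall l, d2 (om l) = lmul (f l) (g l)) (d2_f : forall l, d2 (f l) = 0).

Definition omega_prod (P : pred 'I_k) : L := \big[@lmul n/Defs.one n]_(l < k | P l) om l.

(* L_C and L'_C are circuit_sum for om l = omega_{c_l} and f l the x-, resp.
   y-difference along c_l. *)
Definition circuit_sum : L := \sum_(i < k) \sum_(j < k | (i < j)%N)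
  sc ((-1) ^+ (i + j)) (lmul (f i) (omega_prod (fun l => (l != i) && (l != j)))).

Definition omega_avoid3 (p q r : 'I_k) : L := omega_prod (fun l => [&& l != p, l != q & l != r]).

Lemma omega_avoid3C p q r : omega_avoid3 p r q = omega_avoid3 p q r.
Proof. by apply: eq_bigl => l; case: (l != p); case: (l != q); case: (l != r). Qed.

Lemma omega_avoid3_rot p q r : omega_avoid3 q r p = omega_avoid3 p q r.
Proof. by apply: eq_bigl => l; case: (l != p); case: (l != q); case: (l != r). Qed.

Lemma rel_ideal_omega_prod (h : 'I_k -> L) (P : pred 'I_k) m :
  (forall l, homog 1 (h l)) -> (forall l, I (lmul (h l) (om l))) -> P m ->
  I (lmul (h m) (omega_prod P)).
Proof. by move=> hh Ih Pm; apply: (rel_ideal_big_lmul (x := m)); rewrite ?mem_index_enum. Qed.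

Lemma rel_ideal_triple p q r (w := omega_avoid3 p q r) : p != q -> q != r -> p != r ->
  I (lmul (f p) (lmul (lmul (f r) (g r)) w) - lmul (f p) (lmul (lmul (f q) (g q)) w)
     + lmul (f q) (lmul (lmul (f p) (g p)) w)).
Proof.
move=> npq nqr npr; rewrite triple_bracket //.
have sum3_rest (h : 'I_k -> L) : \sum_(l < k) h l = 0 ->
    h p + h q + h r = - \sum_(l < k | [&& l != p, l != q & l != r]) h l.
  by move=> h0; apply/eqP; rewrite -subr_eq0 opprK -(big_split3 h npq nqr npr) h0.
rewrite !sum3_rest //.
have rel_rest (h : 'I_k -> L) : (forall l, homog 1 (h l)) ->
    (forall l, I (lmul (h l) (om l))) ->
    I (lmul (\sum_(l < k | [&& l != p, l != q & l != r]) h l) w).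
  by move=> hh Ih; rewrite lmul_suml; apply: rel_ideal_sum => l Pl; exact: rel_ideal_omega_prod.
have homog_rest : homog 1 (\sum_(l < k | [&& l != p, l != q & l != r]) f l).
  by apply: homog_sum => l _.
apply: rel_idealB; rewrite lmulNl ?lmulNr; apply/rel_idealN/rel_idealMl.
  rewrite -lmulA (lmul_oddC homog_rest (@g_odd r)) lmulNl lmulA.
  by apply/rel_idealN/rel_idealMl; exact: rel_rest.
by apply: rel_idealMl; exact: rel_rest.
Qed.

Lemma sign_count_avoid2 (i j m : 'I_k) : i != j ->
  (-1) ^+ count (fun l => (l != i) && (l != j))
     (take (index m (index_enum 'I_k)) (index_enum 'I_k)) =
  (-1) ^+ (m + (i < m) + (j < m))%N :> rat.
Proof.
move=> nij; rewrite -signr_odd -[RHS]signr_odd.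
rewrite -[X in odd (X + _ + _)](count_avoid2_take_ord m nij) !oddD.
by case: (odd _); case: (i < m)%N; case: (j < m)%N.
Qed.

(* (-1) ^+ (m + (i < m) + (j < m)) is the sign of moving omega_m to the front of
   omega_prod (fun l => (l != i) && (l != j)). *)
Lemma d2_circuit_sum : d2 circuit_sum =
  \sum_(i < k) \sum_(j < k | (i < j)%N) \sum_(m < k | (m != i) && (m != j))
    sc (- (-1) ^+ (i + j + m + (i < m) + (j < m))%N)
      (lmul (f i) (lmul (lmul (f m) (g m)) (omega_avoid3 i j m))).
Proof.
rewrite raddf_sum; apply: eq_bigr => i _; rewrite raddf_sum; apply: eq_bigr => j ij /=.
have nij : i != j by rewrite -val_eqE neq_ltn ij.
rewrite d2Z d2_lmul_odd // d2_f lmul0l sub0r d2_big_lmul ?index_enum_uniq //.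
rewrite lmul_sumr -sumrN sc_sumr; apply: eq_bigr => m _.
rewrite lmulZr d2_om -scN1 !scA sign_count_avoid2 // mulrN1 mulNr -exprD !addnA /omega_prod.
by congr (sc _ (lmul _ (lmul _ _))); apply: eq_bigl => l; rewrite andbA.
Qed.

Lemma rel_ideal_d2_circuit_sum : I (d2 circuit_sum).
Proof.
rewrite d2_circuit_sum sum_pairs_avoid; apply: rel_ideal_sum => p _.
apply: rel_ideal_sum => q pq; apply: rel_ideal_sum => r qr.
have pr := ltn_trans pq qr.
have [npq nqr npr] : [/\ p != q, q != r & p != r] by rewrite -!val_eqE !neq_ltn pq qr pr.
have Iw := rel_ideal_triple npq nqr npr.
rewrite (omega_avoid3C p q r) (omega_avoid3_rot p q r).
rewrite pr qr pq ltnNge (ltnW qr) ltnNge (ltnW pq) ltnNge (ltnW pr) /=.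
apply: (eq_ind _ (fun v => I v) (rel_idealZ (- (-1) ^+ (p + q + r)) Iw)).
rewrite scDr scBr -scNl; congr (_ + _ + _); congr (sc _ _).
- by rewrite !addn1 !exprS !mulN1r opprK.
- by rewrite addn0 addn1 exprS mulN1r (addnAC p r q).
- by rewrite !addn0 [(q + r + p)%N]addnC addnA.
Qed.

End CircuitClass.

(** * The braid arrangement *)

Section BraidArrangement.
Variable n : nat.
Local Notation L := (Lam n).
Local Notation I := (@in_rel_ideal n).

Lemma homogW (i j : 'I_n) : homog 1 (W i j).
Proof. by rewrite /W; case: insub => [q|] /=; [exact: homog_gen | exact: homog0]. Qed.

Lemma WC (i j : 'I_n) : W i j = W j i.
Proof. by rewrite /W; case: ltngtP => // /val_inj->. Qed.

Lemma d2W (i j : 'I_n) : i != j -> d2 (W i j) = lmul (X i - X j) (Y i - Y j).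
Proof.
rewrite /W -val_eqE; case: ltngtP => // ij _; rewrite insubT /= d2_gen //=.
by rewrite -[X j - _]opprB -[Y j - _]opprB lmulNl lmulNr opprK.
Qed.

Lemma rel_ideal_XW (i j : 'I_n) : i != j -> I (lmul (X i - X j) (W i j)).
Proof. by move=> nij; apply: rel_ideal_rel; left; exists i, j. Qed.

Lemma rel_ideal_YW (i j : 'I_n) : i != j -> I (lmul (Y i - Y j) (W i j)).
Proof. by move=> nij; apply: rel_ideal_rel; right; left; exists i, j. Qed.

Lemma sum_circuit_diff k (c : 'I_k -> 'I_n * 'I_n) (h : 'I_n -> L) :
  (forall m, (c m).2 = (c (ordS m)).1) -> \sum_(l < k) (h (c l).2 - h (c l).1) = 0.
Proof.
move=> c_next; rewrite sumrB (eq_bigr (fun l => h (c (ordS l)).1)) => [|l _]; last by rewrite c_next.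
by rewrite [X in _ - X](reindex_inj (@ordS_inj k)) subrr.
Qed.

Lemma rel_ideal_d2_circuit_sum_edges k (c : 'I_k -> 'I_n * 'I_n) (u v : 'I_n -> L) :
  (forall m, (c m).1 != (c m).2) -> (forall m, (c m).2 = (c (ordS m)).1) ->
  (forall i, homog 1 (u i)) -> (forall i, homog 1 (v i)) -> (forall i, d2 (u i) = 0) ->
  (forall i j, i != j -> I (lmul (u i - u j) (W i j))) ->
  (forall i j, i != j -> I (lmul (v i - v j) (W i j))) ->
  (forall i j, i != j -> d2 (W i j) = lmul (u i - u j) (v i - v j)) ->
  I (d2 (circuit_sum (fun l => omega_edge (c l)) (fun l => u (c l).2 - u (c l).1))).
Proof.
move=> c_edge c_next u_odd v_odd d2u rel_u rel_v d2_W.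
have c_edge' m : (c m).2 != (c m).1 by rewrite eq_sym.
apply: (@rel_ideal_d2_circuit_sum _ _ _ _ (fun l => v (c l).2 - v (c l).1)) => [l|l|l|||l|l|l|l].
- exact: homogW.
- exact: homogB.
- exact: homogB.
- exact: sum_circuit_diff.
- exact: sum_circuit_diff.
- by rewrite /omega_edge WC; exact: rel_u.
- by rewrite /omega_edge WC; exact: rel_v.
- by rewrite /omega_edge WC; exact: d2_W.
- by rewrite raddfB /= !d2u subrr.
Qed.

End BraidArrangement.

Theorem theorem2p5 (n k : nat) (c : 'I_k -> 'I_n * 'I_n) :
  (3 <= n)%N -> is_circuit c ->
  in_rel_ideal (d2 (L_C c)) /\ in_rel_ideal (d2 (L'_C c)).
Proof.
move=> _ [_ c_edge c_next _]; split.
  apply: rel_ideal_d2_circuit_sum_edges (fun i => Y i) _ _ _ _ _ _ _ _ => //.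
  - by move=> i; exact: homog_gen.
  - by move=> i; exact: homog_gen.
  - by move=> i; exact: d2_gen.
  - exact: rel_ideal_XW.
  - exact: rel_ideal_YW.
  - exact: d2W.
(* d2 (W i j) = (X i - X j) (Y i - Y j) = (Y i - Y j) (- X i - - X j) *)
apply: rel_ideal_d2_circuit_sum_edges (fun i => - X i) _ _ _ _ _ _ _ _ => //.
- by move=> i; exact: homog_gen.
- by move=> i; apply/homogN/homog_gen.
- by move=> i; exact: d2_gen.
- exact: rel_ideal_YW.
- by move=> i j nij; rewrite -opprD lmulNl; apply/rel_idealN/rel_ideal_XW.
- move=> i j nij; rewrite d2W // -opprD lmulNr -lmul_oddC //; apply: homogB; exact: homog_gen.
Qed.
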